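(* Let $F$ be a PLSEM-function whose Jacobian $\mathrm{D}F$ is lower triangular. Fix $l\in\{1,\dots,p\}$ and a constant orthogonal projection matrix $A\in\mathbb{R}^{p\times p}$. Let $S\subseteq\{1,\dots,p\}\setminus\{l\}$ and let $u,u_s:\mathbb{R}\to\mathbb{R}$ ($s\in S$) be twice continuously differentiable, with each $u_s'\not\equiv0$. If $$u\Big(x_l+\sum_{s\in S}u_s(x_s)\Big)=F(x)^t(\mathrm{Id}-A)\,\partial_lF(x)\quad\text{for all }x\in\mathbb{R}^p,$$ then $(\mathrm{Id}-A)\,\partial_l^2F\equiv0$.
   Context: A PLSEM with DAG $D$ on $\{1,\dots,p\}$ is a system $X_j=\mu_j+\sum_{i\in\mathrm{pa}_D(j)} f_{j,i}(X_i)+\varepsilon_j$, $j=1,\dots,p$, where $\mu_j\in\mathbb{R}$, $f_{j,i}\in C^2(\mathbb{R})$, $f_{j,i}\not\equiv 0$, $\mathbb{E}[f_{j,i}(X_i)]=0$, and $\varepsilon_1,\dots,\varepsilon_p$ are mutually independent with $\varepsilon_j\sim\mathcal{N}(0,\sigma_j^2)$, $\sigma_j^2>0$. Its PLSEM-function is $F(x)_j=\frac{1}{\sigma_j}\big(x_j-\mu_j-\sum_{i\in\mathrm{pa}_D(j)}f_{j,i}(x_i)\big)$. $\partial_lF$ and $\partial_l^2F$ denote the vectors of first and second partial derivatives of the components of $F$ in $x_l$. *)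

(* real analysis over Stdlib Reals. Indices are 0-based:
   {1,...,p} of the paper is {0,...,p-1} here. Vectors in R^p are
   functions nat -> R of which only entries < p are used. *)
From Stdlib Require Import Reals List Relations.
Import ListNotations.
Open Scope R_scope.

Fixpoint rsum (n : nat) (g : nat -> R) : R :=
  match n with
  | O => 0
  | S m => rsum m g + g m
  end.

Definition lsum (s : list nat) (g : nat -> R) : R :=
  fold_right (fun i acc => g i + acc) 0 s.

Definition kdelta (i j : nat) : R := if Nat.eq_dec i j then 1 else 0.

Definition upd (x : nat -> R) (i : nat) (t : R) : nat -> R :=
  fun k => if Nat.eq_dec k i then t else x k.

Definition C2 (g : R -> R) : Prop :=
  exists g' g'' : R -> R,
    (forall t, derivable_pt_lim g t (g' t)) /\
    (forall t, derivable_pt_lim g' t (g'' t)) /\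
    continuity g''.

Definition edge (pa : nat -> list nat) (i j : nat) : Prop := In i (pa j).

Definition is_DAG (p : nat) (pa : nat -> list nat) : Prop :=
  (forall j, (p <= j)%nat -> pa j = []) /\
  (forall j i, In i (pa j) -> (i < p)%nat) /\
  (forall j, NoDup (pa j)) /\
  (forall i, ~ clos_trans nat (edge pa) i i).

(* Admissible PLSEM data (deterministic part). *)
Definition PLSEM_data (p : nat) (pa : nat -> list nat) (mu : nat -> R)
  (f : nat -> nat -> R -> R) (sigma : nat -> R) : Prop :=
  is_DAG p pa /\
  (forall j, (j < p)%nat -> 0 < sigma j) /\
  (forall j i, In i (pa j) -> C2 (f j i) /\ exists t, f j i t <> 0).

Definition PLSEM_fun (pa : nat -> list nat) (mu : nat -> R)
  (f : nat -> nat -> R -> R) (sigma : nat -> R) (x : nat -> R) (j : nat) : R :=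
  / sigma j * (x j - mu j - lsum (pa j) (fun i => f j i (x i))).

Definition orth_proj (p : nat) (A : nat -> nat -> R) : Prop :=
  (forall i j, (i < p)%nat -> (j < p)%nat -> A i j = A j i) /\
  (forall i j, (i < p)%nat -> (j < p)%nat ->
     rsum p (fun k => A i k * A k j) = A i j).

From Stdlib Require Import Reals List Relations Lra Lia FunctionalExtensionality Classical.
Open Scope R_scope.

(* Because F is additive in the coordinates, the partials dF = d_l F and d2F = d_l^2 F at x
   depend on x_l only; put v = (Id - A) dF and w = (Id - A) d2F.  Lower triangularity makes
   F_k constant in x_l for k < l, and F_l affine in x_l with slope 1/sigma_l, so d2F_k = 0
   for k <= l.  For k > l, w_k = 0 by downward induction on k = m: once w vanishes above m,
   the x_l-derivative u'(x_l + sum_s u_s(x_s)) = dF.v + F.w of the identity is affine in x_m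
   with slope w_m/sigma_m.  The slope is 0 if m is not in S.  If S contains m and another
   index s, comparing mixed differences in x_m and x_s forces u'' = 0.  If S = {m}, the
   identity itself gives u(t + u_m(b)) - u(t + u_m(0)) = b v_m/sigma_m; differentiating in
   t yields u'(t + u_m(b)) = C + b k with k = w_m/sigma_m, and in b that (C + b k) u_m'(b)
   is constant; were k nonzero, this constant would be 0, so u_m' = 0 off one point,
   contradicting u''(t + u_m(b)) u_m'(b) = k.  Finally Id - A is an orthogonal projection, so
   |w|^2 = w.d2F = sum_k w_k d2F_k = 0. *)

Lemma derivable_pt_lim_comp_fun (f g : R -> R) x a b :
  derivable_pt_lim g x a -> derivable_pt_lim f (g x) b ->
  derivable_pt_lim (fun t => f (g t)) x (b * a).
Proof. apply derivable_pt_lim_comp. Qed.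

Lemma derivable_pt_lim_add_cst_l (g : R -> R) c x a :
  derivable_pt_lim g x a -> derivable_pt_lim (fun t => c + g t) x a.
Proof.
  intros Hg. replace a with (0 + a) by ring.
  apply (derivable_pt_lim_plus (fun _ => c)); [apply derivable_pt_lim_const | exact Hg].
Qed.

Lemma derivable_pt_lim_add_cst_r (g : R -> R) c x a :
  derivable_pt_lim g x a -> derivable_pt_lim (fun t => g t + c) x a.
Proof.
  intros Hg. apply (derivable_pt_lim_ext (fun t => c + g t)); [intro; ring|].
  now apply derivable_pt_lim_add_cst_l.
Qed.

Lemma derivable_pt_lim_mul_cst_l (g : R -> R) c x a :
  derivable_pt_lim g x a -> derivable_pt_lim (fun t => c * g t) x (c * a).
Proof. apply derivable_pt_lim_scal. Qed.

Lemma derivable_pt_lim_affine c k x : derivable_pt_lim (fun b => c + b * k) x k.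
Proof.
  apply derivable_pt_lim_add_cst_l.
  pose proof (derivable_pt_lim_scal_right id x 1 k (derivable_pt_lim_id x)) as H.
  now rewrite Rmult_1_l in H.
Qed.

Lemma derivable_pt_lim_eq0_const (g : R -> R) :
  (forall t, derivable_pt_lim g t 0) -> forall a b, g a = g b.
Proof.
  intros Hg a b. destruct (MVT_abs g (fun _ => 0) a b) as [c [Hc _]]; [intros; apply Hg|].
  rewrite Rabs_R0, Rmult_0_l in Hc.
  destruct (Rcase_abs (g b - g a)) as [Hn|Hp];
    [rewrite Rabs_left in Hc | rewrite Rabs_right in Hc]; lra.
Qed.

Lemma exists_deriv_neq0 (g g1 : R -> R) :
  (forall t, derivable_pt_lim g t (g1 t)) -> ~ (forall t, derivable_pt_lim g t 0) ->
  exists c, g1 c <> 0.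
Proof.
  intros Hg Hn. apply NNPP; intro Hall. apply Hn; intro t.
  replace 0 with (g1 t); [apply Hg|]. apply NNPP; intro Ht. apply Hall. now exists t.
Qed.

Lemma affine_mul_const_slope_eq0 (h d : R -> R) (C k P : R) :
  (forall b, (C + b * k) * h b = P) -> (forall b, d b * h b = k) -> k = 0.
Proof.
  intros Hprod Hslope. apply NNPP; intro Hk.
  set (b0 := - C / k).
  assert (HP : P = 0).
  { rewrite <- (Hprod b0). unfold b0. field_simplify; [ring|exact Hk]. }
  assert (Hh : h (b0 + 1) = 0).
  { specialize (Hprod (b0 + 1)). replace (C + (b0 + 1) * k) with k in Hprod
      by (unfold b0; field; exact Hk).
    destruct (Rmult_integral k (h (b0 + 1))); [lra | contradiction | assumption]. }
  specialize (Hslope (b0 + 1)). rewrite Hh, Rmult_0_r in Hslope. auto.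
Qed.

Lemma slope_eq0_of_affine_diff (u u1 u2 g g1 P : R -> R) (t0 k : R) :
  (forall t, derivable_pt_lim u t (u1 t)) -> (forall t, derivable_pt_lim u1 t (u2 t)) ->
  (forall t, derivable_pt_lim g t (g1 t)) ->
  (forall t b, u (t + g b) - u (t + g 0) = b * P t) ->
  derivable_pt_lim P t0 k -> k = 0.
Proof.
  intros Hu Hu1 Hg Hdiff HP.
  assert (Hlin : forall b, u1 (t0 + g b) = u1 (t0 + g 0) + b * k).
  { intro b. enough (u1 (t0 + g b) * 1 - u1 (t0 + g 0) * 1 = b * k) by lra.
    apply (uniqueness_limite (fun t => u (t + g b) - u (t + g 0)) t0).
    - apply derivable_pt_lim_minus; apply derivable_pt_lim_comp_fun; try apply Hu;
        apply derivable_pt_lim_add_cst_r, derivable_pt_lim_id.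
    - apply (derivable_pt_lim_ext (fun t => b * P t)); [intro; auto|].
      now apply derivable_pt_lim_mul_cst_l. }
  apply (affine_mul_const_slope_eq0 g1 (fun b => u2 (t0 + g b)) (u1 (t0 + g 0)) k (P t0)).
  - intro b. rewrite <- Hlin.
    apply (uniqueness_limite (fun b => u (t0 + g b)) b).
    + apply derivable_pt_lim_comp_fun; [apply derivable_pt_lim_add_cst_l, Hg | apply Hu].
    + apply (derivable_pt_lim_ext (fun b => u (t0 + g 0) + b * P t0)).
      * intro c. rewrite <- (Hdiff t0 c). ring.
      * apply derivable_pt_lim_affine.
  - intro b. apply (uniqueness_limite (fun b => u1 (t0 + g b)) b).
    + apply derivable_pt_lim_comp_fun; [apply derivable_pt_lim_add_cst_l, Hg | apply Hu1].
    + apply (derivable_pt_lim_ext (fun b => u1 (t0 + g 0) + b * k)); [intro; auto|].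
      apply derivable_pt_lim_affine.
Qed.

Lemma second_deriv_eq0_of_mixed_diff (u u1 u2 g g1 h h1 : R -> R) (c0 b0 : R) :
  (forall t, derivable_pt_lim u t (u1 t)) -> (forall t, derivable_pt_lim u1 t (u2 t)) ->
  (forall t, derivable_pt_lim g t (g1 t)) -> (forall t, derivable_pt_lim h t (h1 t)) ->
  g1 c0 <> 0 -> h1 b0 <> 0 ->
  (forall T c a b, u (T + g c + h b) - u (T + g c + h a)
                   = u (T + g 0 + h b) - u (T + g 0 + h a)) ->
  forall z, u2 z = 0.
Proof.
  intros Hu Hu1 Hg Hh Hc0 Hb0 Hmixed.
  assert (Hu1_const : forall T a b, u1 (T + g c0 + h b) = u1 (T + g c0 + h a)).
  { intros T a b. apply (Rmult_eq_reg_r (g1 c0)); [|exact Hc0].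
    enough (u1 (T + g c0 + h b) * g1 c0 - u1 (T + g c0 + h a) * g1 c0 = 0) by lra.
    apply (uniqueness_limite (fun c => u (T + g c + h b) - u (T + g c + h a)) c0).
    - apply derivable_pt_lim_minus; apply derivable_pt_lim_comp_fun; try apply Hu;
        apply derivable_pt_lim_add_cst_r, derivable_pt_lim_add_cst_l, Hg.
    - apply (derivable_pt_lim_ext (fun _ => u (T + g 0 + h b) - u (T + g 0 + h a))).
      + intro c. symmetry. apply Hmixed.
      + apply derivable_pt_lim_const. }
  assert (Hu2 : forall T, u2 (T + g c0 + h b0) = 0).
  { intro T. apply (Rmult_eq_reg_r (h1 b0)); [|exact Hb0]. rewrite Rmult_0_l.
    apply (uniqueness_limite (fun b => u1 (T + g c0 + h b)) b0).
    - apply derivable_pt_lim_comp_fun; [apply derivable_pt_lim_add_cst_l, Hh | apply Hu1].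
    - apply (derivable_pt_lim_ext (fun _ => u1 (T + g c0 + h 0))).
      + intro b. now rewrite (Hu1_const T 0 b).
      + apply derivable_pt_lim_const. }
  intro z. pose proof (Hu2 (z - g c0 - h b0)) as Hz.
  now replace (z - g c0 - h b0 + g c0 + h b0) with z in Hz by ring.
Qed.

Lemma rsum_ext n g h : (forall j, (j < n)%nat -> g j = h j) -> rsum n g = rsum n h.
Proof.
  induction n as [|n IH]; simpl; intros Hgh; [reflexivity|].
  rewrite IH by (intros; apply Hgh; lia). rewrite (Hgh n) by lia. reflexivity.
Qed.

Lemma rsum_plus n g h : rsum n (fun j => g j + h j) = rsum n g + rsum n h.
Proof. induction n as [|n IH]; simpl; [ring | rewrite IH; ring]. Qed.

Lemma rsum_minus n g h : rsum n (fun j => g j - h j) = rsum n g - rsum n h.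
Proof. induction n as [|n IH]; simpl; [ring | rewrite IH; ring]. Qed.

Lemma rsum_scal n c g : rsum n (fun j => c * g j) = c * rsum n g.
Proof. induction n as [|n IH]; simpl; [ring | rewrite IH; ring]. Qed.

Lemma rsum_eq0 n g : (forall j, (j < n)%nat -> g j = 0) -> rsum n g = 0.
Proof.
  intros Hg. rewrite (rsum_ext n g (fun j => 0 * g j)).
  - rewrite rsum_scal. ring.
  - intros j Hj. rewrite (Hg j Hj). ring.
Qed.

Lemma rsum_eq_single n m g :
  (m < n)%nat -> (forall j, (j < n)%nat -> j <> m -> g j = 0) -> rsum n g = g m.
Proof.
  induction n as [|n IH]; simpl; intros Hm Hg; [lia|].
  destruct (Nat.eq_dec m n) as [->|Hmn].
  - rewrite rsum_eq0; [ring|]. intros; apply Hg; lia.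
  - rewrite IH; [rewrite (Hg n) by lia; ring | lia | intros; apply Hg; lia].
Qed.

Lemma rsum_comm n m (g : nat -> nat -> R) :
  rsum n (fun j => rsum m (fun k => g j k)) = rsum m (fun k => rsum n (fun j => g j k)).
Proof.
  induction n as [|n IH]; simpl.
  - symmetry. apply rsum_eq0. reflexivity.
  - now rewrite IH, <- rsum_plus.
Qed.

Lemma rsum_sq_nonneg n g : 0 <= rsum n (fun j => g j * g j).
Proof. induction n as [|n IH]; simpl; [lra|]. pose proof (Rle_0_sqr (g n)). unfold Rsqr in *. lra. Qed.

Lemma rsum_sq_eq0 n g : rsum n (fun j => g j * g j) = 0 -> forall j, (j < n)%nat -> g j = 0.
Proof.
  induction n as [|n IH]; simpl; intros Hsum j Hj; [lia|].
  pose proof (rsum_sq_nonneg n g). pose proof (Rle_0_sqr (g n)). unfold Rsqr in *.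
  destruct (Nat.eq_dec j n) as [->|Hjn].
  - apply Rsqr_0_uniq. unfold Rsqr. lra.
  - apply IH; [lra | lia].
Qed.

Lemma kdelta_sym i j : kdelta i j = kdelta j i.
Proof. unfold kdelta. destruct (Nat.eq_dec i j), (Nat.eq_dec j i); congruence. Qed.

Lemma rsum_kdelta n k g : (k < n)%nat -> rsum n (fun j => kdelta k j * g j) = g k.
Proof.
  intros Hk. rewrite (rsum_eq_single n k); [|exact Hk|].
  - unfold kdelta. destruct (Nat.eq_dec k k); [ring | congruence].
  - intros j _ Hjk. unfold kdelta. destruct (Nat.eq_dec k j); [congruence | ring].
Qed.

Lemma derivable_pt_lim_rsum n (g : nat -> R -> R) d x :
  (forall j, (j < n)%nat -> derivable_pt_lim (g j) x (d j)) ->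
  derivable_pt_lim (fun t => rsum n (fun j => g j t)) x (rsum n d).
Proof.
  induction n as [|n IH]; simpl; intros Hg.
  - apply derivable_pt_lim_const.
  - apply derivable_pt_lim_plus; [apply IH; intros; apply Hg; lia | apply Hg; lia].
Qed.

Definition dot (n : nat) (a b : nat -> R) : R := rsum n (fun j => a j * b j).

Definition mxv (n : nat) (M : nat -> nat -> R) (d : nat -> R) (j : nat) : R :=
  rsum n (fun k => M j k * d k).

Definition proj_compl (A : nat -> nat -> R) (j k : nat) : R := kdelta j k - A j k.

Lemma orth_proj_compl n A : orth_proj n A -> orth_proj n (proj_compl A).
Proof.
  intros [Asym Aidem]. unfold proj_compl. split.
  - intros i j Hi Hj. now rewrite kdelta_sym, Asym.
  - intros i j Hi Hj.
    rewrite (rsum_ext _ _ (fun k => kdelta i k * (kdelta k j - A k j)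
                                    - kdelta j k * A i k + A i k * A k j)).
    + rewrite rsum_plus, rsum_minus, !rsum_kdelta, Aidem by assumption. ring.
    + intros k _. rewrite (kdelta_sym k j). ring.
Qed.

Lemma orth_proj_mxv_idem n P d k :
  orth_proj n P -> (k < n)%nat -> mxv n P (mxv n P d) k = mxv n P d k.
Proof.
  intros [_ Pidem] Hk. unfold mxv.
  rewrite (rsum_ext _ _ (fun j => rsum n (fun i => P k j * P j i * d i)))
    by (intros; rewrite <- rsum_scal; apply rsum_ext; intros; ring).
  rewrite rsum_comm. apply rsum_ext. intros i Hi.
  rewrite (rsum_ext _ _ (fun j => d i * (P k j * P j i))) by (intros; ring).
  rewrite rsum_scal, Pidem by assumption. ring.
Qed.

Lemma orth_proj_dot_self n P d :
  orth_proj n P -> dot n (mxv n P d) (mxv n P d) = dot n (mxv n P d) d.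
Proof.
  intros HP. unfold dot at 1. unfold mxv at 2.
  rewrite (rsum_ext _ _ (fun j => rsum n (fun k => mxv n P d j * P j k * d k)))
    by (intros; rewrite <- rsum_scal; apply rsum_ext; intros; ring).
  rewrite rsum_comm. apply rsum_ext. intros k Hk.
  rewrite <- (orth_proj_mxv_idem n P d k HP Hk).
  change (mxv n P (mxv n P d) k) with (rsum n (fun j => P k j * mxv n P d j)).
  rewrite Rmult_comm, <- rsum_scal. apply rsum_ext. intros j Hj.
  destruct HP as [Psym _]. rewrite (Psym k j) by assumption. ring.
Qed.

Lemma orth_proj_mxv_eq0 n P d :
  orth_proj n P -> (forall k, (k < n)%nat -> mxv n P d k = 0 \/ d k = 0) ->
  forall j, (j < n)%nat -> mxv n P d j = 0.
Proof.
  intros HP Hk. apply rsum_sq_eq0. fold (dot n (mxv n P d) (mxv n P d)).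
  rewrite orth_proj_dot_self by exact HP. apply rsum_eq0. intros k Hkn.
  destruct (Hk k Hkn) as [-> | ->]; ring.
Qed.

Lemma upd_eq x i a : upd x i a i = a.
Proof. unfold upd. destruct (Nat.eq_dec i i); congruence. Qed.

Lemma upd_neq x i a k : k <> i -> upd x i a k = x k.
Proof. unfold upd. destruct (Nat.eq_dec k i); congruence. Qed.

Lemma upd_same x i : upd x i (x i) = x.
Proof. apply functional_extensionality. intro k. unfold upd. destruct (Nat.eq_dec k i); congruence. Qed.

Lemma upd_upd x i a b : upd (upd x i a) i b = upd x i b.
Proof. apply functional_extensionality. intro k. unfold upd. now destruct (Nat.eq_dec k i). Qed.

Lemma lsum_ext_in s g h : (forall i, In i s -> g i = h i) -> lsum s g = lsum s h.
Proof.
  induction s as [|a s IH]; simpl; intros Hgh; [reflexivity|].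
  rewrite Hgh, IH by auto. reflexivity.
Qed.

Lemma lsum_minus s g h : lsum s (fun i => g i - h i) = lsum s g - lsum s h.
Proof. induction s as [|a s IH]; simpl; [ring | rewrite IH; ring]. Qed.

Lemma lsum_upd_notin s (g : nat -> R -> R) x i e :
  ~ In i s -> lsum s (fun k => g k (upd x i e k)) = lsum s (fun k => g k (x k)).
Proof.
  intros Hi. apply lsum_ext_in. intros k Hk. rewrite upd_neq; [reflexivity|].
  intros ->. contradiction.
Qed.

Lemma lsum_upd_in s (g : nat -> R -> R) x i e : NoDup s -> In i s ->
  lsum s (fun k => g k (upd x i e k)) = lsum s (fun k => g k (x k)) - g i (x i) + g i e.
Proof.
  induction s as [|a s IH]; simpl; intros Hnd Hin; [contradiction|].
  inversion Hnd as [|? ? Ha Hs]; subst.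
  destruct Hin as [<-|Hin].
  - rewrite upd_eq, lsum_upd_notin by exact Ha. ring.
  - rewrite IH, upd_neq by (auto || intros ->; contradiction). ring.
Qed.

Lemma lsum_of_singleton s g m :
  NoDup s -> In m s -> (forall i, In i s -> i = m) -> lsum s g = g m.
Proof.
  intros Hnd Hm Hall. destruct s as [|a [|b s]]; simpl.
  - contradiction.
  - rewrite (Hall a) by (left; reflexivity). ring.
  - exfalso. inversion Hnd as [|? ? Hab]. apply Hab. left.
    rewrite (Hall a), (Hall b); simpl; auto.
Qed.

Lemma nat_down_ind (lo hi : nat) (Q : nat -> Prop) :
  (forall m, (lo < m < hi)%nat -> (forall k, (m < k < hi)%nat -> Q k) -> Q m) ->
  forall m, (lo < m < hi)%nat -> Q m.
Proof.
  intros Hstep.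
  enough (H : forall n m, (lo < m < hi)%nat -> (hi - n <= m)%nat -> Q m)
    by (intros m Hm; apply (H hi); lia).
  induction n as [|n IH]; intros m Hm Hn; [lia|].
  apply Hstep; [exact Hm|]. intros k Hk. apply IH; lia.
Qed.

Lemma partial_local_of_local (g d : (nat -> R) -> nat -> R) l :
  (forall y y', y l = y' l -> g y = g y') ->
  (forall x j, derivable_pt_lim (fun t => g (upd x l t) j) (x l) (d x j)) ->
  forall y y', y l = y' l -> d y = d y'.
Proof.
  intros Hg Hd y y' Hl. apply functional_extensionality. intro j.
  apply (uniqueness_limite (fun t => g (upd y l t) j) (y l)); [apply Hd|].
  apply (derivable_pt_lim_ext (fun t => g (upd y' l t) j)).
  - intro t. rewrite (Hg (upd y l t) (upd y' l t)); [reflexivity|]. now rewrite !upd_eq.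
  - rewrite Hl. apply Hd.
Qed.

Lemma partial_eq0_of_const (g d : (nat -> R) -> nat -> R) l j c :
  (forall y, g y j = c) ->
  (forall x, derivable_pt_lim (fun t => g (upd x l t) j) (x l) (d x j)) ->
  forall x, d x j = 0.
Proof.
  intros Hc Hd x. apply (uniqueness_limite (fun t => g (upd x l t) j) (x l)); [apply Hd|].
  apply (derivable_pt_lim_ext (fun _ => c)); [intro; now rewrite Hc|].
  apply derivable_pt_lim_const.
Qed.

Section PLSEM_function.
Variables (pa : nat -> list nat) (mu : nat -> R) (f : nat -> nat -> R -> R) (sigma : nat -> R).
Local Notation F := (PLSEM_fun pa mu f sigma).

Lemma PLSEM_fun_upd_sub_indep x x' s a b j :
  F (upd x s b) j - F (upd x s a) j = F (upd x' s b) j - F (upd x' s a) j.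
Proof.
  assert (E : forall y, F (upd y s b) j - F (upd y s a) j
    = / sigma j * ((if Nat.eq_dec j s then b - a else 0)
       - lsum (pa j) (fun i => if Nat.eq_dec i s then f j i b - f j i a else 0))).
  { intro y. unfold PLSEM_fun.
    replace (if Nat.eq_dec j s then b - a else 0) with (upd y s b j - upd y s a j)
      by (unfold upd; destruct (Nat.eq_dec j s); ring).
    rewrite (lsum_ext_in (pa j) (fun i => if Nat.eq_dec i s then f j i b - f j i a else 0)
               (fun i => f j i (upd y s b i) - f j i (upd y s a i)))
      by (intros i _; unfold upd; destruct (Nat.eq_dec i s); ring).
    rewrite lsum_minus. ring. }
  now rewrite !E.
Qed.

Lemma PLSEM_fun_upd_sub_diag x m a b :
  ~ In m (pa m) -> F (upd x m b) m - F (upd x m a) m = / sigma m * (b - a).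
Proof. intros Hm. unfold PLSEM_fun. rewrite !upd_eq, !lsum_upd_notin by exact Hm. ring. Qed.

Lemma PLSEM_fun_upd_const_of_triangular p :
  (forall x j i, (j < i)%nat -> (i < p)%nat ->
     derivable_pt_lim (fun t => F (upd x i t) j) (x i) 0) ->
  forall x j m a b, (j < m)%nat -> (m < p)%nat -> F (upd x m b) j = F (upd x m a) j.
Proof.
  intros Htri x j m a b Hjm Hmp.
  apply (derivable_pt_lim_eq0_const (fun t => F (upd x m t) j)). intro t.
  pose proof (Htri (upd x m t) j m Hjm Hmp) as H. rewrite upd_eq in H.
  revert H. apply derivable_pt_lim_ext. intro s. now rewrite upd_upd.
Qed.

Lemma PLSEM_fun_partial_local l (dF : (nat -> R) -> nat -> R) :
  (forall x j, derivable_pt_lim (fun t => F (upd x l t) j) (x l) (dF x j)) ->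
  forall y y', y l = y' l -> dF y = dF y'.
Proof.
  intros HdF y y' Hl. apply functional_extensionality. intro j.
  apply (uniqueness_limite (fun t => F (upd y l t) j) (y l)); [apply HdF|].
  apply (derivable_pt_lim_ext
           (fun t => F (upd y' l t) j + (F (upd y l 0) j - F (upd y' l 0) j))).
  - intro t. pose proof (PLSEM_fun_upd_sub_indep y y' l 0 t j). lra.
  - rewrite Hl. apply derivable_pt_lim_add_cst_r, HdF.
Qed.

End PLSEM_function.

Section PLSEM_identity.
Variables (p : nat) (pa : nat -> list nat) (mu : nat -> R) (f : nat -> nat -> R -> R)
  (sigma : nat -> R) (l : nat) (A : nat -> nat -> R) (S : list nat) (u u1 u2 : R -> R)
  (us : nat -> R -> R) (dF d2F : (nat -> R) -> nat -> R).
Local Notation F := (PLSEM_fun pa mu f sigma).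
Local Notation v x := (mxv p (proj_compl A) (dF x)).
Local Notation w x := (mxv p (proj_compl A) (d2F x)).
Local Notation src x := (lsum S (fun s => us s (x s))).

Hypothesis sigma_pos : forall j, (j < p)%nat -> 0 < sigma j.
Hypothesis no_self_loop : forall j, ~ In j (pa j).
Hypothesis F_lower :
  forall x j m a b, (j < m)%nat -> (m < p)%nat -> F (upd x m b) j = F (upd x m a) j.
Hypothesis l_lt_p : (l < p)%nat.
Hypothesis S_NoDup : NoDup S.
Hypothesis S_range : forall s, In s S -> (s < p)%nat /\ s <> l.
Hypothesis u_deriv : forall t, derivable_pt_lim u t (u1 t).
Hypothesis u1_deriv : forall t, derivable_pt_lim u1 t (u2 t).
Hypothesis us_nonconst :
  forall s, In s S -> C2 (us s) /\ ~ (forall t, derivable_pt_lim (us s) t 0).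
Hypothesis dF_deriv :
  forall x j, derivable_pt_lim (fun t => F (upd x l t) j) (x l) (dF x j).
Hypothesis d2F_deriv :
  forall x j, derivable_pt_lim (fun t => dF (upd x l t) j) (x l) (d2F x j).
Hypothesis identity : forall x, u (x l + src x) = dot p (F x) (v x).

Lemma dF_local y y' : y l = y' l -> dF y = dF y'.
Proof. exact (PLSEM_fun_partial_local pa mu f sigma l dF dF_deriv y y'). Qed.

Lemma d2F_local y y' : y l = y' l -> d2F y = d2F y'.
Proof. exact (partial_local_of_local dF d2F l dF_local d2F_deriv y y'). Qed.

Lemma l_notin_S : ~ In l S.
Proof. intros Hl. now apply (S_range l Hl). Qed.

Lemma v_deriv x j : derivable_pt_lim (fun t => v (upd x l t) j) (x l) (w x j).
Proof.
  apply derivable_pt_lim_rsum. intros k _. apply derivable_pt_lim_mul_cst_l, d2F_deriv.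
Qed.

Lemma identity_deriv x : u1 (x l + src x) = dot p (dF x) (v x) + dot p (F x) (w x).
Proof.
  apply (uniqueness_limite (fun t => dot p (F (upd x l t)) (v (upd x l t))) (x l)).
  - apply (derivable_pt_lim_ext (fun t => u (t + src x))).
    + intro t. rewrite <- identity, upd_eq, lsum_upd_notin by exact l_notin_S. reflexivity.
    + rewrite <- (Rmult_1_r (u1 _)). apply derivable_pt_lim_comp_fun; [|apply u_deriv].
      apply derivable_pt_lim_add_cst_r, derivable_pt_lim_id.
  - unfold dot. rewrite <- rsum_plus. apply derivable_pt_lim_rsum. intros j _.
    pose proof (derivable_pt_lim_mult _ _ _ _ _ (dF_deriv x j) (v_deriv x j)) as H.
    cbv beta in H. now rewrite upd_same in H.
Qed.

Lemma dot_F_upd_sub x m a b (c : nat -> R) :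
  (m < p)%nat -> (forall k, (m < k < p)%nat -> c k = 0) ->
  dot p (F (upd x m b)) c - dot p (F (upd x m a)) c = / sigma m * (b - a) * c m.
Proof.
  intros Hm Hc. unfold dot. rewrite <- rsum_minus, (rsum_eq_single p m); [|exact Hm|].
  - rewrite <- Rmult_minus_distr_r, PLSEM_fun_upd_sub_diag by apply no_self_loop. ring.
  - intros k Hk Hkm. destruct (Nat.lt_ge_cases k m).
    + rewrite (F_lower x k m a b) by assumption. ring.
    + rewrite Hc by lia. ring.
Qed.

Lemma coord_eq0_of_dot_F_upd x m (c : nat -> R) :
  (m < p)%nat -> (forall k, (m < k < p)%nat -> c k = 0) ->
  dot p (F (upd x m 1)) c = dot p (F (upd x m 0)) c -> c m = 0.
Proof.
  intros Hm Hc Heq. pose proof (dot_F_upd_sub x m 0 1 c Hm Hc) as Hsub.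
  rewrite Heq, Rminus_diag, Rminus_0_r, Rmult_1_r in Hsub.
  assert (Hinv : / sigma m <> 0) by (apply Rinv_neq_0_compat; specialize (sigma_pos m Hm); lra).
  destruct (Rmult_integral _ _ (eq_sym Hsub)); [contradiction | assumption].
Qed.

Lemma v_eq0_of_notin x m :
  (m < p)%nat -> m <> l -> ~ In m S -> (forall y k, (m < k < p)%nat -> v y k = 0) ->
  v x m = 0.
Proof.
  intros Hm Hml HmS Habove. apply (coord_eq0_of_dot_F_upd x m); [exact Hm | auto |].
  assert (Hv : forall e, dot p (F (upd x m e)) (v x) = u (x l + src x)).
  { intro e. rewrite (dF_local x (upd x m e)) by (rewrite upd_neq; auto).
    rewrite <- identity, upd_neq, lsum_upd_notin by auto. reflexivity. }
  now rewrite !Hv.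
Qed.

Lemma w_eq0_of_u1_invariant x m :
  (m < p)%nat -> m <> l -> (forall y k, (m < k < p)%nat -> w y k = 0) ->
  u1 (x l + src (upd x m 1)) = u1 (x l + src (upd x m 0)) -> w x m = 0.
Proof.
  intros Hm Hml Habove Hu1. apply (coord_eq0_of_dot_F_upd x m); [exact Hm | auto |].
  assert (Hw : forall e, dot p (F (upd x m e)) (w x)
                         = u1 (x l + src (upd x m e)) - dot p (dF x) (v x)).
  { intro e. assert (Hl : x l = upd x m e l) by (rewrite upd_neq; auto).
    rewrite (d2F_local x (upd x m e) Hl), (dF_local x (upd x m e) Hl), Hl, identity_deriv.
    ring. }
  now rewrite !Hw, Hu1.
Qed.

Lemma u2_eq0_of_two_sources m s : In m S -> In s S -> s <> m -> forall z, u2 z = 0.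
Proof.
  intros Hm Hs Hsm.
  destruct (us_nonconst m Hm) as [[g1 [g2 [Hg _]]] Hgn].
  destruct (us_nonconst s Hs) as [[h1 [h2 [Hh _]]] Hhn].
  destruct (exists_deriv_neq0 _ _ Hg Hgn) as [c0 Hc0].
  destruct (exists_deriv_neq0 _ _ Hh Hhn) as [b0 Hb0].
  destruct (S_range m Hm) as [_ Hml], (S_range s Hs) as [_ Hsl].
  apply (second_deriv_eq0_of_mixed_diff u u1 u2 (us m) g1 (us s) h1 c0 b0); auto.
  intros T c a b.
  set (z0 := fun _ : nat => 0).
  set (K := src z0 - us m 0 - us s 0).
  set (y := fun c => upd (upd z0 l (T - K)) m c).
  (* [K] is chosen so that at the point [upd (y c) s b] the argument of [u] is
     [T + us m c + us s b]. *)
  assert (Hpt : forall c b, u (T + us m c + us s b) = dot p (F (upd (y c) s b)) (v (y 0))).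
  { intros c' b'.
    assert (Hl : y 0 l = upd (y c') s b' l).
    { unfold y. rewrite (upd_neq _ s), !(upd_neq _ m), !upd_eq by congruence. reflexivity. }
    rewrite (dF_local (y 0) (upd (y c') s b') Hl), <- identity, <- Hl.
    unfold y. rewrite lsum_upd_in, lsum_upd_in, lsum_upd_notin by auto using l_notin_S.
    rewrite !(upd_neq _ m), upd_eq, !(upd_neq _ l) by congruence.
    f_equal. unfold K, z0. ring. }
  rewrite !Hpt. unfold dot. rewrite <- !rsum_minus. apply rsum_ext. intros k _.
  rewrite <- !Rmult_minus_distr_r, (PLSEM_fun_upd_sub_indep pa mu f sigma (y c) (y 0)).
  reflexivity.
Qed.

Lemma w_eq0_single_source x m :
  (l < m < p)%nat -> In m S -> (forall s, In s S -> s = m) -> w x m = 0.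
Proof.
  intros Hm HmS Hall.
  assert (Hsrc : forall y, src y = us m (y m))
    by (intro y; exact (lsum_of_singleton S (fun s => us s (y s)) m S_NoDup HmS Hall)).
  assert (Hv_above : forall k, (m < k < p)%nat -> forall y, v y k = 0).
  { apply (nat_down_ind m p (fun k => forall y, v y k = 0)). intros k Hk IH y. apply v_eq0_of_notin; [lia | lia | |].
    - intros HkS. specialize (Hall k HkS). lia.
    - intros y' k' Hk'. now apply IH. }
  destruct (us_nonconst m HmS) as [[g1 [g2 [Hg _]]] _].
  assert (Hslope : / sigma m * w x m = 0).
  { apply (slope_eq0_of_affine_diff u u1 u2 (us m) g1
             (fun t => / sigma m * v (upd x l t) m) (x l)); auto.
    - intros t b.
      assert (Hpt : forall e, u (t + us m e) = dot p (F (upd (upd x l t) m e)) (v (upd x l t))).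
      { intro e. rewrite (dF_local (upd x l t) (upd (upd x l t) m e))
          by (symmetry; apply upd_neq; lia).
        rewrite <- identity, Hsrc, upd_eq, upd_neq, upd_eq by lia. reflexivity. }
      rewrite !Hpt, dot_F_upd_sub; [ring | lia |]. intros k Hk. now apply Hv_above.
    - apply derivable_pt_lim_mul_cst_l, v_deriv. }
  assert (Hinv : / sigma m <> 0) by (apply Rinv_neq_0_compat; specialize (sigma_pos m ltac:(lia)); lra).
  destruct (Rmult_integral _ _ Hslope); [contradiction | assumption].
Qed.

Lemma w_eq0_above : forall m, (l < m < p)%nat -> forall x, w x m = 0.
Proof.
  apply (nat_down_ind l p (fun m => forall x, w x m = 0)). intros m Hm Habove x.
  assert (Hw_above : forall y k, (m < k < p)%nat -> w y k = 0) by (intros; now apply Habove).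
  destruct (classic (In m S)) as [HmS | HmS].
  - destruct (classic (exists s, In s S /\ s <> m)) as [[s [Hs Hsm]] | Hsingle].
    + apply w_eq0_of_u1_invariant; [lia | lia | exact Hw_above |].
      apply derivable_pt_lim_eq0_const. intro t.
      rewrite <- (u2_eq0_of_two_sources m s HmS Hs Hsm t). apply u1_deriv.
    + apply w_eq0_single_source; [exact Hm | exact HmS |].
      intros s Hs. apply NNPP. intro Hsm. apply Hsingle. now exists s.
  - apply w_eq0_of_u1_invariant; [lia | lia | exact Hw_above |].
    now rewrite !lsum_upd_notin by exact HmS.
Qed.

Lemma d2F_eq0_upto x k : (k <= l)%nat -> d2F x k = 0.
Proof.
  intros Hk. apply (partial_eq0_of_const dF d2F l k (if Nat.eq_dec k l then / sigma l else 0));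
    [|intro; apply d2F_deriv].
  intro y. apply (uniqueness_limite (fun t => F (upd y l t) k) (y l)); [apply dF_deriv|].
  destruct (Nat.eq_dec k l) as [-> | Hkl].
  - apply (derivable_pt_lim_ext (fun t => F (upd y l 0) l + t * / sigma l)).
    + intro t. pose proof (PLSEM_fun_upd_sub_diag pa mu f sigma y l 0 t (no_self_loop l)). lra.
    + apply derivable_pt_lim_affine.
  - apply (derivable_pt_lim_ext (fun _ => F (upd y l 0) k)).
    + intro t. apply F_lower; lia.
    + apply derivable_pt_lim_const.
Qed.

End PLSEM_identity.

Theorem mainTheorem13 (p : nat) (pa : nat -> list nat) (mu : nat -> R)
  (f : nat -> nat -> R -> R) (sigma : nat -> R)
  (l : nat) (A : nat -> nat -> R) (S : list nat)
  (u : R -> R) (us : nat -> R -> R)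
  (dF d2F : (nat -> R) -> nat -> R) :
  PLSEM_data p pa mu f sigma ->
  (* the Jacobian DF is lower triangular *)
  (forall x j i, (j < i)%nat -> (i < p)%nat ->
     derivable_pt_lim (fun t => PLSEM_fun pa mu f sigma (upd x i t) j) (x i) 0) ->
  (l < p)%nat ->
  orth_proj p A ->
  NoDup S ->
  (forall s, In s S -> (s < p)%nat /\ s <> l) ->
  C2 u ->
  (forall s, In s S -> C2 (us s) /\ ~ (forall t, derivable_pt_lim (us s) t 0)) ->
  (* dF x = partial_l F (x), d2F x = partial_l^2 F (x) *)
  (forall x j, derivable_pt_lim (fun t => PLSEM_fun pa mu f sigma (upd x l t) j)
                 (x l) (dF x j)) ->
  (forall x j, derivable_pt_lim (fun t => dF (upd x l t) j) (x l) (d2F x j)) ->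
  (forall x : nat -> R,
     u (x l + lsum S (fun s => us s (x s))) =
     rsum p (fun j => PLSEM_fun pa mu f sigma x j *
                      rsum p (fun k => (kdelta j k - A j k) * dF x k))) ->
  forall x j, (j < p)%nat ->
    rsum p (fun k => (kdelta j k - A j k) * d2F x k) = 0.
Proof.
  intros [[_ [_ [_ Hacyclic]]] [Hsigma _]] Htri Hl HA HSnd HS [u1 [u2 [Hu1 [Hu2 _]]]]
    Hus HdF Hd2F Hid x j Hj.
  assert (Hloop : forall m, ~ In m (pa m)) by (intros m Hm; exact (Hacyclic m (t_step _ _ _ _ Hm))).
  pose proof (PLSEM_fun_upd_const_of_triangular pa mu f sigma p Htri) as Hlower.
  change (mxv p (proj_compl A) (d2F x) j = 0).
  apply (orth_proj_mxv_eq0 p _ _ (orth_proj_compl p A HA)); [|exact Hj].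
  intros k Hk. destruct (Nat.le_gt_cases k l) as [Hkl | Hkl].
  - right. apply (d2F_eq0_upto p pa mu f sigma l dF d2F); auto.
  - left. apply (w_eq0_above p pa mu f sigma l A S u u1 u2 us dF d2F); auto.
Qed.
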